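(* Consider the distributed quantized weight-balancing algorithm described in the context on a strongly connected digraph with $N$ nodes, with step-size $\gamma(k)=2^{-n}$ for $2^n-1\le k\le 2^{n+1}-2$. Let $\tilde T=3N(N-1)N^{2N}$ and let $k_0\in\mathbb{Z}_{++}$ be such that $\gamma(k)=\gamma(k_0)$ for all $k\in[k_0,k_0+\tilde T]$. Let $\tau\ge k_0$ be an integer such that $\Vert\boldsymbol{\epsilon}(\tau-1)\Vert_1<2N(N-1)\gamma(\tau-1)$ and $\Vert\boldsymbol{\epsilon}(\tau)\Vert_1\ge 2N(N-1)\gamma(\tau)$. Then there exists an integer $t\in[1,\tilde T]$ such that $\Vert\boldsymbol{\epsilon}(\tau+t)\Vert_1<2N(N-1)\gamma(\tau+t)$.
   Context: $\mathcal{G}=(\mathcal{V},\mathcal{E})$, $\mathcal{V}=\{1,\dots,N\}$, no self-loops; $\mathcal{N}_i^-=\{j:(j,i)\in\mathcal{E}\}$, $\mathcal{N}_i^+=\{j:(i,j)\in\mathcal{E}\}$, $d_i^+=|\mathcal{N}_i^+|$. Algorithm: $a_{ij}(0)=1$ if $j\in\mathcal{N}_i^-$ and $0$ otherwise; $b_i(k)=\sum_{j\in\mathcal{N}_i^-}a_{ij}(k)-\sum_{j\in\mathcal{N}_i^+}a_{ji}(k)$; $n_i(k)=1$ if $b_i(k)\ge d_i^+\gamma(k)$, else $0$; $a_{ij}(k+1)=a_{ij}(k)+n_j(k)\gamma(k)$ for $j\in\mathcal{N}_i^-$. $\boldsymbol{\epsilon}(k)=(|b_i(k)|)_{i=1}^N$.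 *)

From HB Require Import structures.
From mathcomp Require Import all_boot all_order all_algebra.
Set Implicit Arguments. Unset Strict Implicit. Unset Printing Implicit Defensive.
Import Order.TTheory GRing.Theory Num.Theory.
Local Open Scope ring_scope.

(* step size gamma(k) = 2^{-n} where 2^n - 1 <= k <= 2^{n+1} - 2,
   i.e. n = floor(log2 (k+1)). *)
Definition gamma {R : realFieldType} (k : nat) : R :=
  (2%:R ^- trunc_log 2 k.+1)%R.

Definition outdeg {N : nat} (E : rel 'I_N) (i : 'I_N) : nat := #|[pred j | E i j]|.

Definition imbalance {R : realFieldType} {N : nat} (E : rel 'I_N)
  (a : 'I_N -> 'I_N -> R) (i : 'I_N) : R :=
  \sum_(j | E j i) a i j - \sum_(j | E i j) a j i.

Definition nflag {R : realFieldType} {N : nat} (E : rel 'I_N)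
  (a : 'I_N -> 'I_N -> R) (k : nat) (i : 'I_N) : bool :=
  (outdeg E i)%:R * gamma k <= imbalance E a i.

Fixpoint weights {R : realFieldType} {N : nat} (E : rel 'I_N) (k : nat)
  : 'I_N -> 'I_N -> R :=
  match k with
  | 0 => fun i j => if E j i then 1 else 0
  | k'.+1 =>
      let a := weights E k' in
      fun i j => if E j i then a i j + (if nflag E a k' j then gamma k' else 0)
                 else a i j
  end.

Definition eps_norm1 {R : realFieldType} {N : nat} (E : rel 'I_N) (k : nat) : R :=
  \sum_i `|imbalance E (weights E k) i|.

Definition Ttilde (N : nat) : nat := 3 * N * (N - 1) * N ^ (2 * N).

From HB Require Import structures.
From mathcomp Require Import all_boot all_order all_algebra.
From mathcomp Require Import zify ring lra.
Set Implicit Arguments. Unset Strict Implicit. Unset Printing Implicit Defensive.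
Import Order.TTheory GRing.Theory Num.Theory.
Local Open Scope ring_scope.

(** Let the deficit D(k) be the total negative imbalance, so that
    ||eps(k)||_1 = 2 D(k).  Negative imbalances only shrink, so D never
    increases, and D(k) is an integer multiple of gamma(k).  Since the
    threshold is crossed at tau, gamma halves there and then stays equal to
    gamma(tau) during the next Ttilde steps, and D(tau) < 2N(N-1) gamma(tau).
    Suppose ||eps|| stays above the threshold, i.e. D >= N(N-1) gamma, during
    the whole window; then some node fires at every step.  Cut the window into
    N(N-1) blocks of length 3N^(2N).  If D were constant on a block, negative
    nodes and their in-neighbours could not fire, and along every edge v -> w
    the firing counts would satisfy f(v) gamma <= D + (N-1) f(w) gamma; by strong
    connectivity f <= D N^(N-1) / gamma everywhere, too few firings for a
    block that long.  So D drops by at least gamma per block, by N(N-1) gamma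
    overall, contradicting N(N-1) gamma <= D < 2N(N-1) gamma. *)

Definition level (k : nat) : nat := trunc_log 2 k.+1.

Lemma level_bounds k : (2 ^ level k <= k.+1 < 2 ^ (level k).+1)%N.
Proof. exact: trunc_log_bounds. Qed.

Lemma level_eq n k : (2 ^ n <= k.+1 < 2 ^ n.+1)%N -> level k = n.
Proof. exact: trunc_log_eq. Qed.

Lemma level_leS k : (level k.+1 <= (level k).+1)%N.
Proof.
rewrite /level -trunc_log2_double //; apply: leq_trunc_log.
by rewrite -addnn addSn addnS !ltnS leq_addl.
Qed.

(* [tau] starts a dyadic block of length [2 ^ level tau >= 2 ^ level k0 > T]. *)
Lemma level_window k0 T tau : level (k0 + T) = level k0 -> (k0 <= tau)%N ->
  (level tau.-1 < level tau)%N ->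
  forall s, (tau <= s <= tau + T)%N -> level s = level tau.
Proof.
move=> k0T k0tau jump s /andP[tau_s s_tauT].
have tau_gt0 : (0 < tau)%N by case: tau jump {k0tau tau_s s_tauT}; rewrite ?ltnn.
have T_lt : (T < 2 ^ level k0)%N.
  have := level_bounds k0; have := level_bounds (k0 + T); rewrite k0T expnS; lia.
have tau_lt : (tau < 2 ^ level tau)%N.
  have jump' : (trunc_log 2 tau < level tau)%N by rewrite -{1}(prednK tau_gt0).
  by rewrite ltnNge; apply/negP => /(trunc_log_max (leqnn 2)); rewrite leqNgt jump'.
have pow_le : (2 ^ level k0 <= 2 ^ level tau)%N by rewrite leq_exp2l // leq_trunc_log.
have tau_bounds := level_bounds tau.
by apply: level_eq; rewrite expnS; lia.
Qed.

Section StepSize.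
Variable R : realFieldType.

Lemma gammaE k : gamma k = (2 ^+ level k)^-1 :> R.
Proof. by []. Qed.

Lemma gamma_gt0 k : 0 < gamma k :> R.
Proof. by rewrite gammaE invr_gt0 exprn_gt0. Qed.

Lemma gamma0 : gamma 0 = 1 :> R.
Proof. by rewrite gammaE /level trunc_log1 invr1. Qed.

Lemma ler_gamma m n : (gamma m <= gamma n :> R) = (level n <= level m)%N.
Proof. by rewrite !gammaE lef_pV2 ?posrE ?exprn_gt0 // ler_eXn2l // ltr1n. Qed.

Lemma gamma_inj_level m n : gamma m = gamma n :> R -> level m = level n.
Proof. by move=> eq_mn; apply/eqP; rewrite eqn_leq -!ler_gamma eq_mn lexx. Qed.

Lemma gammaS_mul k : gamma k = 2 ^+ (level k.+1 - level k) * gamma k.+1 :> R.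
Proof.
have le_level : (level k <= level k.+1)%N := leq_trunc_log 2 (leqnSn _).
rewrite !gammaE -{2}(subnK le_level) exprD invfM mulrA.
by rewrite divff ?mul1r // expf_neq0 // pnatr_eq0.
Qed.

Lemma gamma_le_double k : gamma k <= 2 * gamma k.+1 :> R.
Proof.
rewrite gammaS_mul ler_pM2r ?gamma_gt0 //.
by rewrite -[X in _ <= X]expr1 ler_eXn2l ?ltr1n // leq_subLR addn1 level_leS.
Qed.

Lemma gamma_window k0 T tau :
  (forall k, (k0 <= k <= k0 + T)%N -> gamma k = gamma k0 :> R) -> (k0 <= tau)%N ->
  gamma tau < gamma (tau - 1) :> R ->
  forall s, (tau <= s <= tau + T)%N -> gamma s = gamma tau :> R.
Proof.
move=> k0_const k0_tau jump s s_in; rewrite !gammaE (level_window _ k0_tau _ s_in) //.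
  by apply: gamma_inj_level; apply: k0_const; rewrite leq_addr leqnn.
by move: jump; rewrite -subn1 ltNge ler_gamma -ltnNge.
Qed.

End StepSize.

Section NegativePart.
Variable R : realDomainType.

Definition negpart (x : R) : R := if x < 0 then - x else 0.

Lemma negpart_ge0 x : 0 <= negpart x.
Proof. by rewrite /negpart; case: ifP => [/ltW|//]; rewrite oppr_ge0. Qed.

Lemma norm_negpart x : `|x| = x + 2 * negpart x.
Proof.
rewrite /negpart; case: ifPn => [x_lt0|]; first by rewrite ltr0_norm //; lra.
by rewrite -leNgt => x_ge0; rewrite ger0_norm // mulr0 addr0.
Qed.

Variables (T : finType) (x : T -> R).

Lemma sum_negpart_gt0 : 0 < \sum_i negpart (x i) -> exists i, x i < 0.
Proof.
move=> pos; case: (pickP (fun i => x i < 0)) => [i neg_i|nonneg]; first by exists i.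
by move: pos; rewrite big1 ?ltxx // => i _; rewrite /negpart nonneg.
Qed.

Hypothesis sum_x0 : \sum_i x i = 0.

Lemma sum_norm_negpart : \sum_i `|x i| = 2 * \sum_i negpart (x i).
Proof.
by rewrite (eq_bigr _ (fun i _ => norm_negpart (x i))) big_split /= sum_x0 add0r mulr_sumr.
Qed.

Lemma sum_add_negpart : \sum_i (x i + negpart (x i)) = \sum_i negpart (x i).
Proof. by rewrite big_split /= sum_x0 add0r. Qed.

Lemma le_sum_negpart i : x i <= \sum_j negpart (x j).
Proof.
have := sum_x0; rewrite (bigD1 i) //= => /eqP; rewrite addr_eq0 => /eqP ->.
rewrite [X in _ <= X](bigD1 i) //= -sumrN ler_wpDl ?negpart_ge0 ?ler_sum // => j _.
by rewrite /negpart; case: ifPn; rewrite // -leNgt oppr_le0.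
Qed.

End NegativePart.

Lemma eq_ler_sum (R : numDomainType) (T : finType) (F G : T -> R) :
  (forall i, F i <= G i) -> \sum_i F i = \sum_i G i -> forall i, F i = G i.
Proof.
move=> le_FG eq_sum i; apply/eqP; rewrite eq_sym -subr_eq0; apply/eqP.
apply: (@psumr_eq0P _ _ predT (fun j => G j - F j)) => // [j _|].
  by rewrite subr_ge0.
by rewrite sumrB eq_sum subrr.
Qed.

Lemma sum_if_const (R : pzSemiRingType) (T : finType) (P Q : pred T) (c : R) :
  \sum_(j | P j) (if Q j then c else 0) = (\sum_(j | P j) Q j)%N%:R * c.
Proof.
rewrite natr_sum mulr_suml; apply: eq_bigr => j _.
by case: (Q j); rewrite ?mul1r ?mul0r.
Qed.

Lemma int_multiple_sum (R : pzRingType) (T : finType) (P : pred T) (g : R)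
    (F : T -> R) :
  (forall i, P i -> exists z : int, F i = z%:~R * g) ->
  exists z : int, \sum_(i | P i) F i = z%:~R * g.
Proof.
move=> mulF; apply: (big_ind (fun y => exists z : int, y = z%:~R * g)) => //.
- by exists 0; rewrite mul0r.
- by move=> _ _ [a ->] [b ->]; exists (a + b); rewrite intrD mulrDl.
Qed.

Section Dynamics.
Variables (R : realFieldType) (N : nat) (E : rel 'I_N).

Local Notation imb s := (imbalance E (weights (R:=R) E s)).
Local Notation fires s := (nflag E (weights (R:=R) E s) s).

Definition in_firings s i : nat := \sum_(j | E j i) fires s j.

Lemma sum_imbalance (a : 'I_N -> 'I_N -> R) : \sum_i imbalance E a i = 0.
Proof. by rewrite /imbalance sumrB (exchange_big_dep xpredT) //= subrr. Qed.

Lemma imbalanceS s i : imb s.+1 i = imb s i + (in_firings s i)%:R * gamma s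
  - (fires s i)%:R * ((outdeg E i)%:R * gamma s).
Proof.
pose step b : R := if b then gamma s else 0.
rewrite /imbalance /= (eq_bigr (fun j => weights E s i j + step (fires s j))); last first.
  by move=> j ->.
rewrite [X in _ - X](eq_bigr (fun j => weights E s j i + step (fires s i))); last first.
  by move=> j ->.
rewrite !big_split /= !(@sum_if_const R) sum_nat_const natrM /in_firings /outdeg; ring.
Qed.

Lemma fires_neg s i : imb s i < 0 -> fires s i = false.
Proof.
move=> neg_i; apply/negbTE; rewrite /nflag -ltNge (lt_le_trans neg_i) //.
by rewrite mulr_ge0 // ltW ?gamma_gt0.
Qed.

Lemma negpart_imbalanceS s i : negpart (imb s.+1 i) <= negpart (imb s i).
Proof.
have in_ge0 : 0 <= (in_firings s i)%:R * gamma s :> R by rewrite mulr_ge0 // ltW ?gamma_gt0.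
rewrite imbalanceS /negpart; case: (ltP (imb s i) 0) => [neg_i|nonneg_i].
  by rewrite fires_neg //= mul0r subr0; case: ifP => _; lra.
case: ifP => // neg_next; exfalso; move: neg_next.
case fire_i: (fires s i); last by rewrite mul0r subr0; lra.
by move: fire_i; rewrite /nflag mul1r => ?; lra.
Qed.

Lemma negpart_imbalanceS_lt s i : imb s i < 0 -> (0 < in_firings s i)%N ->
  negpart (imb s.+1 i) < negpart (imb s i).
Proof.
move=> neg_i in_pos.
have : 0 < (in_firings s i)%:R * gamma s :> R by rewrite mulr_gt0 ?ltr0n ?gamma_gt0.
by rewrite imbalanceS /negpart fires_neg //= mul0r subr0 neg_i; case: ifP => _; lra.
Qed.

Lemma negpart_imbalance_nonincreasing s s' i : (s <= s')%N ->
  negpart (imb s' i) <= negpart (imb s i).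
Proof.
move/subnK <-; elim: (s' - s)%N => //= n IHn.
exact: le_trans (negpart_imbalanceS _ _) IHn.
Qed.

Definition deficit s : R := \sum_i negpart (imb s i).

Lemma deficit_ge0 s : 0 <= deficit s.
Proof. by rewrite sumr_ge0 // => i _; apply: negpart_ge0. Qed.

Lemma eps_norm1_deficit s : eps_norm1 E s = 2 * deficit s :> R.
Proof. exact/sum_norm_negpart/sum_imbalance. Qed.

Lemma deficit_nonincreasing s s' : (s <= s')%N -> deficit s' <= deficit s.
Proof. by move=> le_ss'; apply: ler_sum => i _; apply: negpart_imbalance_nonincreasing. Qed.

Lemma weights_int_multiple s i j : exists z : int, weights E s i j = z%:~R * gamma s :> R.
Proof.
elim: s i j => [|s IHs] i j /=.
  by rewrite gamma0; case: (E j i); [exists 1 | exists 0]; rewrite mulr1.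
have [z ->] := IHs i j; set c : int := 2 ^+ (level s.+1 - level s).
have gammaS : gamma s = c%:~R * gamma s.+1 :> R by rewrite gammaS_mul rmorphXn.
case: (E j i); last by exists (z * c); rewrite gammaS mulrA intrM.
case: (nflag _ _ _ _); last by exists (z * c); rewrite addr0 gammaS mulrA intrM.
by exists (z * c + c); rewrite gammaS mulrA -mulrDl intrD intrM.
Qed.

Lemma imbalance_int_multiple s i : exists z : int, imb s i = z%:~R * gamma s.
Proof.
rewrite /imbalance.
have [a ->] := int_multiple_sum (P := fun j => E j i) (fun j _ => weights_int_multiple s i j).
have [b ->] := int_multiple_sum (P := fun j => E i j) (fun j _ => weights_int_multiple s j i).
by exists (a - b); rewrite intrB mulrBl.
Qed.

Lemma deficit_int_multiple s : exists z : int, deficit s = z%:~R * gamma s.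
Proof.
apply: int_multiple_sum => i _; have [z ->] := imbalance_int_multiple s i.
exists (negpart z); rewrite /negpart pmulr_llt0 ?gamma_gt0 // ltrz0.
by case: ifP; rewrite ?mulrNz ?mulNr ?mul0r.
Qed.

Lemma deficit_lt_of_eps_pred s (c : R) : 0 <= c ->
  eps_norm1 E (s - 1) < c * gamma (s - 1) -> deficit s < c * gamma s.
Proof.
move=> c_ge0; rewrite eps_norm1_deficit => lt_pred.
have : gamma (s - 1) <= 2 * gamma s :> R.
  case: s {lt_pred} => [|s]; last by rewrite subn1 gamma_le_double.
  by rewrite sub0n ler_pMl ?gamma_gt0 // ler1n.
move/(ler_wpM2l c_ge0); have := deficit_nonincreasing (leq_subr 1 s).
lra.
Qed.

Lemma threshold_gt1 s :
  eps_norm1 E s < 2 * N%:R * (N%:R - 1) * gamma s :> R -> (1 < N)%N.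
Proof.
move=> below; rewrite ltnNge; apply/negP => N_le1; move: below.
have -> : 2 * N%:R * (N%:R - 1) = 0 :> R.
  by move: N_le1; case: (N) => [|[|n]] // _; rewrite ?mulr0n ?mulr1n ?subrr !(mulr0, mul0r).
by rewrite mul0r ltNge eps_norm1_deficit mulr_ge0 ?deficit_ge0.
Qed.

Lemma crossing_gamma_lt s (c : R) : 0 < c ->
  eps_norm1 E (s - 1) < c * gamma (s - 1) -> c * gamma s <= eps_norm1 E s ->
  gamma s < gamma (s - 1) :> R.
Proof.
move=> c_pos below above; rewrite -(ltr_pM2l c_pos) (le_lt_trans above) //.
rewrite (le_lt_trans _ below) //.
by rewrite !eps_norm1_deficit ler_pM2l // deficit_nonincreasing // leq_subr.
Qed.

Lemma deficit_drop s s' : gamma s' = gamma s :> R -> deficit s' < deficit s ->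
  deficit s' + gamma s <= deficit s.
Proof.
have [z' ->] := deficit_int_multiple s'; have [z ->] := deficit_int_multiple s.
move=> ->; rewrite ltr_pM2r ?gamma_gt0 // ltr_int => lt_z'z.
have : (z' + 1)%:~R <= z%:~R :> R by rewrite ler_int lezD1.
by move/(ler_wpM2r (ltW (gamma_gt0 R s))); rewrite intrD mulrDl mul1r.
Qed.

Lemma outdeg_lt (E_irr : irreflexive E) i : (outdeg E i < N)%N.
Proof.
rewrite -[X in (_ < X)%N]card_ord; apply/proper_card/properP; split.
  exact/subsetP.
by exists i; rewrite // inE E_irr.
Qed.

Lemma outdeg_le_pred (E_irr : irreflexive E) i : (outdeg E i)%:R <= N%:R - 1 :> R.
Proof. by rewrite lerBrDr natr1 ler_nat outdeg_lt. Qed.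

Lemma exists_fire (E_irr : irreflexive E) s : (1 < N)%N ->
  N%:R * (N%:R - 1) * gamma s <= deficit s -> exists i, fires s i.
Proof.
move=> N_gt1 large; case: (pickP (fires s)) => [i fire_i|silent]; first by exists i.
have gamma_pos := gamma_gt0 R s.
have N1_pos : 0 < N%:R - 1 :> R by rewrite subr_gt0 ltr1n.
have [i0 neg_i0] : exists i0, imb s i0 < 0.
  by apply: sum_negpart_gt0; apply: lt_le_trans large; rewrite !mulr_gt0 ?ltr0n 1?ltnW.
have pospart_le i : imb s i + negpart (imb s i) <= (N%:R - 1) * gamma s.
  have := silent i; rewrite /nflag => /negbT; rewrite -ltNge => lt_i.
  have := ler_wpM2r (ltW gamma_pos) (outdeg_le_pred E_irr i).
  by rewrite /negpart; case: ifP => _; nra.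
suff : deficit s < \sum_(i : 'I_N) (N%:R - 1) * gamma s.
  by rewrite sumr_const card_ord -[_ *+ N]mulr_natl mulrA; lra.
rewrite /deficit -(sum_add_negpart (sum_imbalance (weights E s))).
rewrite (bigD1 i0) //= [X in _ < X](bigD1 i0) //= ltr_leD ?ler_sum //.
by rewrite /negpart neg_i0 addrN mulr_gt0.
Qed.

Section Stall.
Variables k L : nat.
Hypothesis gamma_const : forall u, (k <= u < k + L)%N -> gamma u = gamma k :> R.
Hypothesis deficit_const : deficit (k + L) = deficit k.

Definition firings i n : nat := \sum_(k <= u < k + n) fires u i.

Lemma imbalance_after n i : (n <= L)%N -> imb (k + n) i =
  imb k i + (\sum_(j | E j i) firings j n)%N%:R * gamma k
  - (firings i n)%:R * ((outdeg E i)%:R * gamma k).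
Proof.
elim: n => [|n IHn] le_nL.
  by rewrite addn0 big1 => [|j _]; rewrite /firings big_geq ?addn0 // !mul0r subr0 addr0.
have firingsS j : firings j n.+1 = (firings j n + fires (k + n) j)%N.
  by rewrite /firings addnS big_nat_recr //= leq_addr.
rewrite addnS imbalanceS gamma_const ?leq_addr ?ltn_add2l // IHn 1?ltnW //.
rewrite firingsS (eq_bigr _ (fun j _ => firingsS j)) big_split /= !natrD -/(in_firings _ _).
ring.
Qed.

Lemma stall_negpart n i : (n <= L)%N -> negpart (imb (k + n) i) = negpart (imb k i).
Proof.
move=> le_nL; have end_eq : negpart (imb (k + L) i) = negpart (imb k i).
  apply: eq_ler_sum deficit_const i => j.
  by apply: negpart_imbalance_nonincreasing; rewrite leq_addr.
apply: le_anti; rewrite negpart_imbalance_nonincreasing ?leq_addr //= -end_eq.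
by rewrite negpart_imbalance_nonincreasing // leq_add2l.
Qed.

Lemma stall_neg n i : (n <= L)%N -> imb k i < 0 -> imb (k + n) i = imb k i.
Proof.
move=> le_nL neg_i; have := stall_negpart i le_nL; rewrite /negpart neg_i.
by case: ifP => _; lra.
Qed.

Lemma stall_in_silent n i j : (n < L)%N -> imb k i < 0 -> E j i -> fires (k + n) j = false.
Proof.
move=> lt_nL neg_i Eji; apply/negbTE/negP => fire_j.
have : (0 < in_firings (k + n) i)%N by rewrite /in_firings (bigD1 j) //= fire_j.
have neg_kn : imb (k + n) i < 0 by rewrite stall_neg // ltnW.
move/(negpart_imbalanceS_lt neg_kn).
by rewrite -addnS !stall_negpart ?ltxx // ltnW.
Qed.

Lemma firings_neg i : imb k i < 0 -> firings i L = 0%N.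
Proof.
move=> neg_i; rewrite /firings big_nat_cond big1 // => u /andP[/andP[le_ku lt_u] _].
by rewrite -(subnKC le_ku) fires_neg // stall_neg // -(leq_add2l k) subnKC // ltnW.
Qed.

Lemma firings_in_neg v w : E v w -> imb k w < 0 -> firings v L = 0%N.
Proof.
move=> Evw neg_w; rewrite /firings big_nat_cond big1 // => u /andP[/andP[le_ku lt_u] _].
by rewrite -(subnKC le_ku) (stall_in_silent _ neg_w Evw) // -(ltn_add2l k) subnKC.
Qed.

Lemma deficit_stall u : (k <= u <= k + L)%N -> deficit u = deficit k.
Proof.
case/andP=> le_ku le_u; apply: le_anti; rewrite deficit_nonincreasing //=.
by rewrite -deficit_const deficit_nonincreasing.
Qed.

Lemma firings_edge (E_irr : irreflexive E) v w : E v w ->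
  (firings v L)%:R * gamma k <= deficit k + (N%:R - 1) * ((firings w L)%:R * gamma k).
Proof.
move=> Evw; have gamma_pos := gamma_gt0 R k.
have N1_ge0 : 0 <= N%:R - 1 :> R := le_trans (ler0n _ _) (outdeg_le_pred E_irr w).
case: (ltP (imb k w) 0) => [neg_w|nonneg_w].
  by rewrite (firings_in_neg Evw neg_w) mul0r addr_ge0 ?deficit_ge0 // !mulr_ge0 // ltW.
have := imbalance_after w (leqnn L).
have := le_sum_negpart (sum_imbalance (weights E (k + L))) w.
rewrite -/(deficit _) deficit_const.
have : (firings v L <= \sum_(j | E j w) firings j L)%N by rewrite (bigD1 v) //= leq_addr.
rewrite -(ler_nat R) => /(ler_wpM2r (ltW gamma_pos)).
have := ler_wpM2r (ltW gamma_pos) (outdeg_le_pred E_irr w).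
move/(ler_wpM2l (ler0n _ (firings w L))).
nra.
Qed.

Lemma firings_bound (E_irr : irreflexive E) (E_sc : forall i j, connect E i j) u :
  0 < deficit k -> (firings u L)%:R * gamma k <= deficit k * N%:R ^+ N.-1.
Proof.
move=> deficit_pos; have [i0 neg_i0] := sum_negpart_gt0 deficit_pos.
have N_ge1 : 1 <= N%:R :> R by rewrite ler1n (leq_trans _ (ltn_ord u)).
have N1_ge0 : 0 <= N%:R - 1 :> R by rewrite subr_ge0.
have along_path q : forall v, path E v q -> last v q = i0 ->
    (firings v L)%:R * gamma k <= deficit k * N%:R ^+ size q.
  elim: q => [|x q IHq] v /=.
    by move=> _ ->; rewrite firings_neg // mul0r expr0 mulr1; apply: ltW.
  case/andP=> Evx path_x /(IHq x path_x) /(ler_wpM2l N1_ge0).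
  have := firings_edge E_irr Evx; rewrite exprS.
  have : deficit k <= deficit k * N%:R ^+ size q by rewrite ler_pMr // exprn_ege1.
  lra.
have /connectP[p path_p i0_last] := E_sc u i0.
case/shortenP: path_p i0_last => q path_q uniq_q _ i0_last.
apply: le_trans (along_path q u path_q (esym i0_last)) _.
apply/(ler_wpM2l (ltW deficit_pos))/ler_weXn2l => //.
have : (size (u :: q) <= N)%N.
  by rewrite -(card_uniqP uniq_q) -[X in (_ <= X)%N](card_ord N) max_card.
rewrite /=; lia.
Qed.

Lemma firings_total (E_irr : irreflexive E) : (1 < N)%N ->
  N%:R * (N%:R - 1) * gamma k <= deficit k -> (L <= \sum_i firings i L)%N.
Proof.
move=> N_gt1 large; rewrite /firings exchange_big /=.
rewrite -[X in (X <= _)%N]muln1 -{1}(addKn k L) -sum_nat_const_nat.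
rewrite big_nat_cond [X in (_ <= X)%N]big_nat_cond; apply: leq_sum => u.
case/andP=> /andP[le_ku lt_u] _.
have u_in : (k <= u <= k + L)%N by rewrite le_ku ltnW.
have [i fire_i] : exists i, fires u i.
  by apply: (exists_fire E_irr N_gt1); rewrite deficit_stall // gamma_const ?le_ku.
by rewrite (bigD1 i) //= fire_i.
Qed.

Lemma stall_impossible (E_irr : irreflexive E) (E_sc : forall i j, connect E i j) :
  (1 < N)%N -> (2 * N * (N - 1) * N ^ N <= L)%N ->
  N%:R * (N%:R - 1) * gamma k <= deficit k ->
  deficit k < 2 * N%:R * (N%:R - 1) * gamma k -> False.
Proof.
move=> N_gt1 L_large low up.
have gamma_pos := gamma_gt0 R k.
set P : R := N%:R ^+ N.-1.
have NP_pos : 0 < N%:R * P by rewrite mulr_gt0 ?exprn_gt0 ?ltr0n 1?ltnW.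
have deficit_pos : 0 < deficit k.
  by apply: lt_le_trans low; rewrite !mulr_gt0 ?ltr0n 1?ltnW // subr_gt0 ltr1n.
have total : L%:R * gamma k <= N%:R * (deficit k * P).
  apply: le_trans (_ : (\sum_i firings i L)%:R * gamma k <= _).
    by rewrite ler_pM2r // ler_nat firings_total.
  rewrite natr_sum mulr_suml mulr_natl -[N in _ *+ N]card_ord -sumr_const.
  by apply: ler_sum => i _; apply: firings_bound.
have : 2 * N%:R * (N%:R - 1) * (N%:R * P) <= L%:R.
  move: L_large; rewrite -(ler_nat R) !natrM natrB 1?ltnW // natrX.
  by rewrite /P -exprS prednK // ltnW.
move/(ler_wpM2r (ltW gamma_pos)).
have := ltr_pM2r NP_pos (deficit k) (2 * N%:R * (N%:R - 1) * gamma k); rewrite up.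
lra.
Qed.

End Stall.

Lemma deficit_descent (E_irr : irreflexive E) (E_sc : forall i j, connect E i j)
  k L : (1 < N)%N -> (2 * N * (N - 1) * N ^ N <= L)%N ->
  deficit k < 2 * N%:R * (N%:R - 1) * gamma k -> forall n,
  (forall u, (k <= u <= k + n * L)%N -> gamma u = gamma k :> R) ->
  (forall u, (k <= u <= k + n * L)%N -> N%:R * (N%:R - 1) * gamma k <= deficit u) ->
  deficit (k + n * L) + n%:R * gamma k <= deficit k.
Proof.
move=> N_gt1 L_large up; elim=> [|n IHn] gamma_win low_win.
  by rewrite mul0n addn0 mul0r addr0.
set m := (k + n * L)%N.
have -> : (k + n.+1 * L = m + L)%N by rewrite /m mulSn addnCA addnC.
have in_win u : (k <= u <= m)%N -> (k <= u <= k + n.+1 * L)%N.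
  by case/andP=> -> le_um; rewrite (leq_trans le_um) // leq_add2l leq_mul2r leqnSn orbT.
have IH := IHn (fun u u_in => gamma_win u (in_win u u_in))
               (fun u u_in => low_win u (in_win u u_in)).
have m_in : (k <= m <= m)%N by rewrite /m leq_addr leqnn.
have gamma_m : gamma m = gamma k :> R := gamma_win m (in_win m m_in).
have gamma_blk u : (m <= u <= m + L)%N -> gamma u = gamma m :> R.
  case/andP=> le_mu le_u; rewrite gamma_m gamma_win // (leq_trans (leq_addr _ _) le_mu).
  by rewrite /= mulSn addnCA addnC.
have low_m : N%:R * (N%:R - 1) * gamma m <= deficit m by rewrite gamma_m low_win ?in_win.
have up_m : deficit m < 2 * N%:R * (N%:R - 1) * gamma m.
  by rewrite gamma_m (le_lt_trans (deficit_nonincreasing (leq_addr _ _))).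
have drop : deficit (m + L) < deficit m.
  rewrite lt_neqAle deficit_nonincreasing ?leq_addr // andbT; apply/eqP => stall.
  have gamma_const u : (m <= u < m + L)%N -> gamma u = gamma m :> R.
    by case/andP=> le_mu /ltnW le_u; rewrite gamma_blk ?le_mu.
  exact: stall_impossible gamma_const stall E_irr E_sc N_gt1 L_large low_m up_m.
have m_end : (m <= m + L <= m + L)%N by rewrite leq_addr leqnn.
have := deficit_drop (gamma_blk (m + L) m_end) drop.
by rewrite gamma_m -natr1; lra.
Qed.
End Dynamics.

Lemma Ttilde_factor N : Ttilde N = (N * (N - 1) * (3 * N ^ (2 * N)))%N.
Proof. by rewrite /Ttilde mulnCA !mulnA. Qed.

Lemma stall_length_le N : (2 * N * (N - 1) * N ^ N <= 3 * N ^ (2 * N))%N.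
Proof.
case: (leqP N 1) => [N_le1|N_gt1]; first by rewrite (_ : (N - 1 = 0)%N) ?muln0 //; lia.
have : (N * (N - 1) * N ^ N <= N ^ (2 * N))%N.
  apply: (@leq_trans (N ^ 2 * N ^ N)).
    by rewrite leq_mul2r -mulnn leq_mul2l leq_subr !orbT.
  by rewrite -expnD leq_pexp2l; lia.
by rewrite -!mulnA => /(leq_mul (leqnSn 2)).
Qed.

Theorem lemma7 (R : realFieldType) (N : nat) (E : rel 'I_N)
  (E_irr : irreflexive E)
  (E_sc : forall i j : 'I_N, connect E i j)
  (k0 : nat) (k0_pos : (0 < k0)%N)
  (k0_const : forall k : nat, (k0 <= k <= k0 + Ttilde N)%N ->
                 gamma k = gamma k0 :> R)
  (tau : nat) (tau_ge : (k0 <= tau)%N)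
  (h_before : eps_norm1 (R:=R) E (tau - 1)
                < 2 * N%:R * (N%:R - 1) * gamma (tau - 1))
  (h_at : 2 * N%:R * (N%:R - 1) * gamma tau <= eps_norm1 (R:=R) E tau) :
  exists t : nat, (1 <= t <= Ttilde N)%N /\
    eps_norm1 (R:=R) E (tau + t) < 2 * N%:R * (N%:R - 1) * gamma (tau + t).
Proof.
set c : R := 2 * N%:R * (N%:R - 1); set T := Ttilde N.
have N_gt1 := threshold_gt1 h_before.
have c_pos : 0 < c by rewrite !mulr_gt0 ?ltr0n 1?ltnW // subr_gt0 ltr1n.
have window := gamma_window k0_const tau_ge (crossing_gamma_lt c_pos h_before h_at).
have deficit_up := deficit_lt_of_eps_pred (ltW c_pos) h_before.
pose below t := eps_norm1 E (tau + t) < c * gamma (tau + t).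
case: (boolP [exists t : 'I_T.+1, (0 < t)%N && below t]).
  by case/existsP=> t /andP[t_pos t_below]; exists t; rewrite t_pos -ltnS ltn_ord.
move/existsPn=> never_below; exfalso.
have low s : (tau <= s <= tau + T)%N -> N%:R * (N%:R - 1) * gamma tau <= deficit R E s.
  case/andP=> le_tau_s le_s; suff : c * gamma tau <= eps_norm1 E s.
    by rewrite eps_norm1_deficit /c; lra.
  case: (posnP (s - tau)) => [s_tau|t_pos]; first by have -> : s = tau by lia.
  have t_lt : (s - tau < T.+1)%N by rewrite ltnS leq_subLR.
  have := never_below (Ordinal t_lt); rewrite /below /= t_pos.
  by rewrite subnKC // -leNgt window ?le_tau_s.
have := deficit_descent E_irr E_sc N_gt1 (stall_length_le N) deficit_up.
move=> /(_ (N * (N - 1))%N); rewrite -Ttilde_factor -/T => /(_ window low).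
have := low (tau + T)%N; rewrite leq_addr leqnn natrM natrB 1?ltnW // => /(_ isT).
by move: deficit_up; rewrite /c; lra.
Qed.
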